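(* Let $n\ge 2$ and $b\ge 2$ be integers and $r\ge 0$. The probability that the base-$b$ carries chain for adding $n$ numbers, started at $\kappa_0=0$, is in state $j$ after $r$ steps equals the probability that a random permutation of $S_n$ with law $Q_{b^r}$ (the law of the permutation obtained by performing $r$ successive independent $b$-shuffles starting from the identity) has exactly $j$ descents. In formulas, for $0\le j\le n-1$, $$P_b^r(0,j)=\sum_{\sigma\in S_n:\ d(\sigma)=j} Q_{b^r}(\sigma).$$
   Context: For $\sigma\in S_n$, $\sigma$ has a descent at $i$ ($1\le i\le n-1$) if $\sigma(i+1)<\sigma(i)$; $d(\sigma)$ is the number of descents. Binomial convention: for integers $m$ and $n\ge0$, $\binom{m}{n}=\frac{m(m-1)\cdots(m-n+1)}{n!}$ if $m\ge n$ and $\binom{m}{n}=0$ if $m<n$ (including negative $m$). The $b$-shuffle measure on $S_n$ is $Q_b(\sigma)=\binom{n+b-d(\sigma^{-1})-1}{n}/b^n$ (this is the law of the permutation produced by one $b$-shuffle of the Gilbert–Shannon–Reeds type: cut into $b$ packets multinomially and riffle dropping cards with probability proportional to packet size). It is known that performing an $a$-shuffle followed by a $b$-shuffle gives the law $Q_{ab}$, so $r$ successive $b$-shuffles from the identity yield law $Q_{b^r}$. The base-$b$ carries chain for adding $n$ numbers is the Markov chain $\kappa_0=0,\kappa_1,\kappa_2,\dots$ on $\{0,1,\dots,n-1\}$ given by $\kappa_{t+1}=\lfloor(\kappa_t+X_{t+1,1}+\dots+X_{t+1,n})/b\rfloor$, where the $X_{t,k}$ are i.i.d. uniform on $\{0,1,\dots,b-1\}$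 (the carries when $n$ random base-$b$ integers are added column by column). Its transition matrix is $P_b(i,j)=b^{-n}\sum_{l=0}^{j-\lfloor i/b\rfloor}(-1)^l\binom{n+1}{l}\binom{n-1-i+(j+1-l)b}{n}$, and $P_b^r$ denotes its $r$-step transition matrix. *)

From HB Require Import structures.
From mathcomp Require Import all_boot all_order all_algebra all_fingroup.
Set Implicit Arguments. Unset Strict Implicit. Unset Printing Implicit Defensive.
Import Order.TTheory GRing.Theory Num.Theory.
Local Open Scope ring_scope.

(* Binomial coefficient with the paper's convention: for m : int, k : nat,
   binom m k = m(m-1)...(m-k+1)/k! if m >= k, and 0 if m < k
   (in particular 0 for negative m). *)
Definition gbinom (m : int) (k : nat) : rat :=
  if (k%:Z <= m) then ('C(`|m|%N, k))%:R else 0.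

Definition descents (n : nat) (s : 'S_n) : nat :=
  #|[set i : 'I_n | [exists j : 'I_n, (val j == (val i).+1)%N && (s j < s i)%N]]|.

Definition shuffleQ (n b : nat) (s : 'S_n) : rat :=
  gbinom ((n + b)%:Z - (descents (s^-1)%g)%:Z - 1) n / (b ^ n)%:R.

Definition carriesP (n b i j : nat) : rat :=
  #|[set x : {ffun 'I_n -> 'I_b} | ((i + \sum_(k < n) val (x k)) %/ b == j)%N]|%:R
    / (b ^ n)%:R.

Fixpoint carriesPr (n b r i j : nat) : rat :=
  match r with
  | 0 => ((i == j) : nat)%:R
  | r'.+1 => \sum_(k < n) carriesPr n b r' i k * carriesP n b k j
  end.

From HB Require Import structures.
From mathcomp Require Import all_boot all_order all_algebra all_fingroup zify.
Import Order.TTheory GRing.Theory Num.Theory.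

(* Put [a = b ^ r].  The proof is a chain of bijections between finite sets
   of words of length [n] over [{0,...,a-1}], i.e. finite functions
   ['I_n -> 'I_a], whose cardinalities are compared as natural numbers.

   1. Chapman-Kolmogorov: a digit in base [A * B] is a pair of digits in
      bases [A] and [B], so carry counts compose like transition matrices and
      [P_b^r(i,j) * a^n] is the number of words whose digit sum, added to an
      incoming carry [i], produces the carry [j] in base [a].
   2. Carries are descents: taking partial sums modulo [a] is a bijection on
      words, and the descents of the partial-sum word are exactly the carries
      of the running sum; so [P_b^r(0,j) * a^n] counts the words with [j]
      descents.
   3. Standardization: grouping the words by the permutation [std y] ranking
      their positions by value (ties from left to right) preserves descents.
   4. Stars and bars: the words with [std y = s] are, read in the order of
      [s], the words that rise weakly, and strictly at the descents of
      [s^-1]; there are ['C(a + n - 1 - d(s^-1), n) = a^n * Q_a(s)] of them.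
*)

Lemma card_set_bij {T U : finType} {A : pred T} {B : pred U}
    (f : T -> U) (g : U -> T) :
  (forall x, A x -> B (f x)) -> (forall y, B y -> A (g y)) ->
  (forall x, A x -> g (f x) = x) -> (forall y, B y -> f (g y) = y) ->
  #|[set x | A x]| = #|[set y | B y]|.
Proof.
move=> fAB gBA gK fK.
have -> : [set y | B y] = f @: [set x | A x].
  apply/setP => y; rewrite inE; apply/idP/imsetP => [By | [x]].
    by exists (g y); rewrite ?inE ?fK ?gBA.
  by rewrite inE => Ax ->; apply: fAB.
by rewrite card_in_imset // => x1 x2; rewrite !inE => A1 A2 E; rewrite -(gK _ A1) E gK.
Qed.

Lemma card_set_sum (T : finType) (P : pred T) : #|[set x | P x]| = \sum_x P x.
Proof. by rewrite -sum1dep_card big_mkcond. Qed.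

Lemma sum_by_fibres (T : finType) (n : nat) (g : T -> nat) (F : nat -> nat) :
  (forall x, g x < n) ->
  \sum_x F (g x) = \sum_(k < n) #|[set x | g x == k]| * F k.
Proof.
move=> g_lt; rewrite (partition_big (fun x => Ordinal (g_lt x)) xpredT) //=.
apply: eq_bigr => k _; rewrite (eq_bigr (fun=> F k)) => [|x /eqP <- //].
rewrite sum_nat_const; congr (_ * _); apply: eq_card => x.
by rewrite !inE.
Qed.

Definition carry_count (n a i j : nat) : nat :=
  #|[set x : {ffun 'I_n -> 'I_a} | (i + \sum_(k < n) val (x k)) %/ a == j]|.

Section DigitSplitting.
(* A digit in base [A * B] is a pair of digits: a low one in base [A] and a
   high one in base [B], via [X = x + A * z]. *)
Variables (A B : nat) (A_gt0 : 0 < A).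

Lemma high_digit_lt (X : 'I_(A * B)) : X %/ A < B.
Proof. by rewrite ltn_divLR // [B * A]mulnC. Qed.

Lemma join_digit_lt (x : 'I_A) (z : 'I_B) : x + A * z < A * B.
Proof.
apply: (@leq_trans (A * z.+1)); first by rewrite mulnS ltn_add2r.
by rewrite leq_mul2l ltn_ord orbT.
Qed.

Definition split_word (n : nat) (X : {ffun 'I_n -> 'I_(A * B)}) :=
  ([ffun k => Ordinal (ltn_pmod (X k) A_gt0)],
   [ffun k => Ordinal (high_digit_lt (X k))]).

Definition join_word (n : nat) (p : {ffun 'I_n -> 'I_A} * {ffun 'I_n -> 'I_B}) :
  {ffun 'I_n -> 'I_(A * B)} :=
  [ffun k => Ordinal (join_digit_lt (p.1 k) (p.2 k))].

Lemma split_wordK n : cancel (@split_word n) (@join_word n).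
Proof.
move=> X; apply/ffunP => k; apply/val_inj; rewrite !ffunE /=.
by rewrite (mulnC A (_ %/ _)) addnC -divn_eq.
Qed.

Lemma join_wordK n : cancel (@join_word n) (@split_word n).
Proof.
case=> x z; congr pair; apply/ffunP => k; apply/val_inj; rewrite !ffunE /= (mulnC A (val _)).
  by rewrite addnC modnMDl modn_small.
by rewrite addnC divnMDl // divn_small ?addn0.
Qed.

Lemma sum_join_word n p :
  \sum_(k < n) val (@join_word n p k) =
  \sum_(k < n) val (p.1 k) + A * \sum_(k < n) val (p.2 k).
Proof. by rewrite big_distrr -big_split; apply: eq_bigr => k _; rewrite ffunE. Qed.

Lemma carry_join_word n i p :
  (i + \sum_(k < n) val (@join_word n p k)) %/ (A * B) =
  ((i + \sum_(k < n) val (p.1 k)) %/ A + \sum_(k < n) val (p.2 k)) %/ B.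
Proof. by rewrite sum_join_word divnMA addnA [_ + A * _]addnC mulnC divnMDl // addnC. Qed.

End DigitSplitting.

(* The digit sum of a word of length [n] over [{0,...,A-1}] is at most
   [n * (A - 1)], so an incoming carry [i < n] gives an outgoing carry [< n]. *)
Lemma carry_lt n A i (x : {ffun 'I_n -> 'I_A}) :
  0 < A -> i < n -> (i + \sum_(k < n) val (x k)) %/ A < n.
Proof.
move=> A_gt0 lt_in; rewrite ltn_divLR //.
have : \sum_(k < n) val (x k) + n <= n * A.
  have sum1 : \sum_(k < n) 1 = n by rewrite sum1_card card_ord.
  rewrite -[X in _ + X <= _]sum1 -[X in _ <= X * _]sum1 big_distrl -big_split /=.
  by apply: leq_sum => k _; rewrite addn1 mul1n ltn_ord.
by rewrite mulnC; apply: leq_trans; rewrite addnC ltn_add2l.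
Qed.

(* Chapman-Kolmogorov for carry counts: a word in base [A * B] is a pair of
   words in bases [A] and [B], and its carry is obtained by passing the
   carry [k] of the low word on to the high word. *)
Lemma carry_count_mul n A B i j : 0 < A -> i < n ->
  carry_count n (A * B) i j =
  \sum_(k < n) carry_count n A i k * carry_count n B k j.
Proof.
move=> A_gt0 lt_in.
pose low_carry (x : {ffun 'I_n -> 'I_A}) := (i + \sum_(k < n) val (x k)) %/ A.
have -> : carry_count n (A * B) i j =
    #|[set p : {ffun 'I_n -> 'I_A} * {ffun 'I_n -> 'I_B} |
          (low_carry p.1 + \sum_(k < n) val (p.2 k)) %/ B == j]|.
  rewrite /carry_count.
  apply: (card_set_bij (@split_word A B A_gt0 n) (@join_word A B n)) => [X|p|X _|p _].
  - by rewrite -{1}(@split_wordK A B A_gt0 n X) carry_join_word.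
  - by rewrite carry_join_word.
  - exact: split_wordK.
  - exact: join_wordK.
rewrite card_set_sum -(pair_bigA _ (fun x (z : {ffun 'I_n -> 'I_B}) =>
  nat_of_bool ((low_carry x + \sum_(k < n) val (z k)) %/ B == j))) /=.
rewrite (eq_bigr (fun x => carry_count n B (low_carry x) j)); last first.
  by move=> x _; rewrite /carry_count card_set_sum.
by rewrite (@sum_by_fibres _ n low_carry (fun k => carry_count n B k j)) // => x;
  apply: carry_lt.
Qed.

Lemma carry_count1 n i j : carry_count n 1 i j = (i == j).
Proof.
have sum0 (x : {ffun 'I_n -> 'I_1}) : \sum_(k < n) val (x k) = 0.
  by apply: big1 => k _; case: (x k) => -[].
rewrite /carry_count card_set_sum (eq_bigr (fun=> nat_of_bool (i == j))).
  by rewrite sum_nat_const card_ffun !card_ord exp1n mul1n.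
by move=> x _; rewrite sum0 addn0 divn1.
Qed.

Section CarriesChain.
Local Open Scope ring_scope.

Lemma carriesPr_count n b r i j : (0 < b)%N -> (i < n)%N ->
  carriesPr n b r i j = (carry_count n (b ^ r) i j)%:R / ((b ^ r) ^ n)%:R.
Proof.
move=> b_gt0 lt_in; elim: r j => [|r IHr] j /=.
  by rewrite expn0 carry_count1 exp1n divr1.
rewrite expnSr carry_count_mul ?expn_gt0 ?b_gt0 // natr_sum expnMn natrM invfM.
rewrite mulr_suml; apply: eq_bigr => k _.
by rewrite IHr /carriesP natrM mulrACA.
Qed.

End CarriesChain.

Definition fdescents {n : nat} (f : 'I_n -> nat) : nat :=
  #|[set i : 'I_n | [exists j : 'I_n, (val j == (val i).+1) && (f j < f i)]]|.

Lemma fdescents_sum n' (f : 'I_n'.+1 -> nat) :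
  fdescents f = \sum_(0 <= q < n') (f (inord q.+1) < f (inord q)).
Proof.
rewrite /fdescents card_set_sum big_ord_recr /=.
have -> : [exists j : 'I_n'.+1, (val j == (@ord_max n').+1) && (f j < f ord_max)] = false.
  by apply/existsP => -[j /andP [/eqP j_eq _]]; move: (ltn_ord j); rewrite j_eq ltnn.
rewrite addn0 big_mkord; apply: eq_bigr => i _.
have -> : widen_ord (leqnSn n') i = inord i by apply/val_inj; rewrite /= inordK // ltnS ltnW.
congr (nat_of_bool _); apply/existsP/idP => [[k /andP [/eqP k_eq f_lt]] | f_lt].
  by rewrite (_ : inord i.+1 = k) //; apply/val_inj; rewrite /= k_eq inordK // ltnS.
by exists (inord i.+1); rewrite f_lt inordK ?ltnS // andbT.
Qed.

Lemma carry_digit u v a : u < a -> v < a -> (u + v) %/ a = ((u + v) %% a < u).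
Proof.
move=> u_lt v_lt; have a_gt0 : 0 < a by apply: leq_ltn_trans u_lt.
case: (ltnP (u + v) a) => [uv_lt | a_le].
  by rewrite divn_small // modn_small // ltnNge leq_addr.
have -> : u + v = 1 * a + (u + v - a) by rewrite mul1n subnKC.
by rewrite divnMDl // modnMDl divn_small ?modn_small /=; lia.
Qed.

Section PartialSums.
(* The word of partial sums modulo [a] is a bijection on words,
   inverse to taking successive differences modulo [a], and its descents are
   exactly the carries of the running sum. *)
Variables (n' a : nat) (a_gt0 : 0 < a).
Local Notation n := n'.+1.
Implicit Types x y : {ffun 'I_n -> 'I_a}.

Definition letter x (p : nat) : nat := x (inord p).

Definition prev_letter y (p : nat) : nat := if p is p'.+1 then letter y p' else 0.

Definition psum x (p : nat) : nat := \sum_(0 <= q < p.+1) letter x q.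

Definition psum_word x : {ffun 'I_n -> 'I_a} :=
  [ffun k : 'I_n => Ordinal (ltn_pmod (psum x k) a_gt0)].

Definition diff_word y : {ffun 'I_n -> 'I_a} :=
  [ffun k : 'I_n => Ordinal (ltn_pmod (letter y k + a - prev_letter y k) a_gt0)].

Lemma letter_lt x p : letter x p < a.
Proof. exact: ltn_ord. Qed.

Lemma letter_val x (k : 'I_n) : letter x k = x k.
Proof. by rewrite /letter inord_val. Qed.

Lemma psumS x p : psum x p.+1 = psum x p + letter x p.+1.
Proof. by rewrite /psum big_nat_recr. Qed.

Lemma sum_letters x : \sum_(k < n) val (x k) = psum x n'.
Proof. by rewrite /psum big_mkord; apply: eq_bigr => k _; rewrite letter_val. Qed.

Lemma letter_psum_word x p : p <= n' -> letter (psum_word x) p = psum x p %% a.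
Proof. by move=> le_pn; rewrite /letter ffunE /= inordK. Qed.

Lemma letter_diff_word y p : p <= n' ->
  letter (diff_word y) p = (letter y p + a - prev_letter y p) %% a.
Proof. by move=> le_pn; rewrite /letter ffunE /= inordK. Qed.

Lemma psum_wordK : cancel psum_word diff_word.
Proof.
move=> x; apply/ffunP => k; apply/val_inj.
rewrite -[val (x k)]letter_val -[val (diff_word _ k)]letter_val.
rewrite letter_diff_word -1?ltnS //.
case: (val k) (ltn_ord k) => [|p] lt_pn /=.
  by rewrite letter_psum_word // subn0 modnDr /psum big_nat1 !modn_small ?letter_lt.
rewrite (letter_psum_word _ p.+1 lt_pn) (letter_psum_word _ p (ltnW lt_pn)) psumS.
rewrite -[RHS](@modn_small (letter x p.+1) a) ?letter_lt //.
apply/eqP; rewrite -(eqn_modDr (psum x p %% a)) subnK; last first.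
  by rewrite ltnW // ltn_addl // ltn_pmod.
by rewrite modnDr modn_mod modnDmr addnC.
Qed.

Lemma psum_diff_word y p : p <= n' -> psum (diff_word y) p %% a = letter y p.
Proof.
elim: p => [|p IHp] le_pn.
  by rewrite /psum big_nat1 letter_diff_word //= subn0 modnDr !modn_small ?letter_lt.
rewrite psumS -modnDml IHp ?(ltnW le_pn) // letter_diff_word //= modnDmr addnC.
rewrite subnK; last exact: leq_trans (ltnW (letter_lt y p)) (leq_addl _ _).
by rewrite modnDr modn_small ?letter_lt.
Qed.

Lemma diff_wordK : cancel diff_word psum_word.
Proof.
move=> y; apply/ffunP => k; apply/val_inj; rewrite ffunE /=.
by rewrite psum_diff_word -1?ltnS // letter_val.
Qed.

Lemma psum_div x p : psum x p %/ a = \sum_(0 <= q < p) (psum x q.+1 %% a < psum x q %% a).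
Proof.
elim: p => [|p IHp].
  by rewrite big_geq // /psum big_nat1 divn_small ?letter_lt.
rewrite big_nat_recr //= -IHp psumS {1}(divn_eq (psum x p) a) -addnA divnMDl //.
by rewrite carry_digit ?ltn_pmod ?letter_lt // modnDml.
Qed.

Lemma descents_psum_word x :
  fdescents (fun k => psum_word x k : nat) = (\sum_(k < n) val (x k)) %/ a.
Proof.
rewrite fdescents_sum sum_letters psum_div; apply: eq_big_nat => q /andP [_ lt_qn].
by rewrite -!/(letter (psum_word x) _) !letter_psum_word // ltnW.
Qed.

Lemma carry_count_descents j :
  carry_count n a 0 j = #|[set y : {ffun 'I_n -> 'I_a} | fdescents (fun k => y k : nat) == j]|.
Proof.
apply: (card_set_bij psum_word diff_word) => [x|y|x _|y _].
- by rewrite descents_psum_word.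
- by rewrite -{1}(diff_wordK y) descents_psum_word.
- exact: psum_wordK.
- exact: diff_wordK.
Qed.

End PartialSums.
Arguments letter {n' a} x p.

Section Standardization.
Variables (n a : nat).
Implicit Types (y : {ffun 'I_n -> 'I_a}) (i k l : 'I_n).

Definition lex_lt y k i : bool :=
  (y k < y i) || ((y k == y i :> nat) && (k < i)).

Lemma lex_lt_irr y i : lex_lt y i i = false.
Proof. by rewrite /lex_lt !ltnn andbF. Qed.

Lemma lex_lt_trans {y k i l} : lex_lt y k i -> lex_lt y i l -> lex_lt y k l.
Proof.
rewrite /lex_lt => /orP [lt1|/andP [/eqP eq1 lt1]] /orP [lt2|/andP [/eqP eq2 lt2]].
- by rewrite (ltn_trans lt1 lt2).
- by rewrite -eq2 lt1.
- by rewrite eq1 lt2.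
- by rewrite eq1 eq2 eqxx (ltn_trans lt1 lt2) orbT.
Qed.

Lemma lex_lt_total y k i : k != i -> lex_lt y k i || lex_lt y i k.
Proof.
move=> neq_ki; rewrite /lex_lt; case: (ltngtP (y k) (y i)) => //= _.
by case: (ltngtP k i) => // /val_inj eq_ki; rewrite eq_ki eqxx in neq_ki.
Qed.

Lemma lex_lt_asym y k i : lex_lt y k i -> lex_lt y i k = false.
Proof. by move=> lt_ki; apply/negP => /(lex_lt_trans lt_ki); rewrite lex_lt_irr. Qed.

Definition std_rank y i : nat := #|[set k | lex_lt y k i]|.

Lemma std_rank_lt y i : std_rank y i < n.
Proof.
have : std_rank y i <= #|[set~ i]|.
  apply: subset_leq_card; apply/subsetP => k; rewrite !inE.
  by apply: contraTN => /eqP ->; rewrite lex_lt_irr.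
rewrite cardsC1 card_ord => /leq_ltn_trans; apply.
by rewrite ltn_predL (leq_ltn_trans (leq0n _) (ltn_ord i)).
Qed.

Lemma std_rank_mono y k i : lex_lt y k i -> std_rank y k < std_rank y i.
Proof.
move=> lt_ki; apply: proper_card; apply/properP; split.
  by apply/subsetP => l; rewrite !inE => /lex_lt_trans; apply.
by exists k; rewrite !inE ?lex_lt_irr.
Qed.

Lemma std_rank_inj y : injective (fun i => Ordinal (std_rank_lt y i)).
Proof.
move=> k i /(congr1 val) /= eq_rank; apply/eqP; apply: contraT => neq_ki.
by case/orP: (lex_lt_total y _ _ neq_ki) => /std_rank_mono; rewrite eq_rank ltnn.
Qed.

Definition std y : 'S_n := perm (std_rank_inj y).

Lemma std_lt y k i : (std y k < std y i) = lex_lt y k i.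
Proof.
rewrite !permE /=; apply/idP/idP => [lt_rank|]; last exact: std_rank_mono.
have [eq_ki|neq_ki] := eqVneq k i; first by rewrite eq_ki ltnn in lt_rank.
case/orP: (lex_lt_total y _ _ neq_ki) => // /std_rank_mono lt_rank'.
by have := ltn_trans lt_rank lt_rank'; rewrite ltnn.
Qed.

(* At adjacent positions a tie is never a descent of [std y]. *)
Lemma descents_std y : fdescents (fun k => y k : nat) = descents (std y).
Proof.
apply: eq_card => i; rewrite !inE.
apply/existsP/existsP => -[j /andP [/eqP j_eq lt_j]]; exists j; rewrite j_eq eqxx /=.
  by rewrite std_lt /lex_lt lt_j.
by move: lt_j; rewrite std_lt /lex_lt j_eq (ltnNge (val i).+1) leqnSn andbF orbF.
Qed.

Lemma count_by_std j :
  #|[set y : {ffun 'I_n -> 'I_a} | fdescents (fun k => y k : nat) == j]| =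
  \sum_(s : 'S_n | descents s == j) #|[set y : {ffun 'I_n -> 'I_a} | std y == s]|.
Proof.
rewrite card_set_sum -big_mkcond /=.
rewrite (partition_big std (fun s => descents s == j)) => [|y]; last by rewrite descents_std.
apply: eq_bigr => s des_s; rewrite card_set_sum big_mkcond /=; apply: eq_bigr => y _.
by rewrite descents_std; case: (std y =P s) => [->|]; rewrite ?des_s ?andbF.
Qed.

End Standardization.
Arguments lex_lt {n a} y k i.
Arguments std {n a} y.

Section PermutationOrder.
(* A permutation of ['I_n] is determined by the relative order of its
   values: [s i] is the number of [k] with [s k < s i]. *)
Variable n : nat.

Lemma card_ord_lt c : c <= n -> #|[set m : 'I_n | m < c]| = c.
Proof.
move=> le_cn; have widen_inj : injective (widen_ord le_cn).
  by move=> k l eq_kl; apply: val_inj; exact: (congr1 (@nat_of_ord n) eq_kl).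
rewrite -[RHS]card_ord -cardsT -(card_imset _ widen_inj); apply: eq_card => m.
rewrite !inE; apply/idP/imsetP => [lt_mc | [k _ ->]]; last by rewrite /= ltn_ord.
by exists (Ordinal lt_mc); last by apply: val_inj.
Qed.

Lemma card_perm_lt (s : 'S_n) i : #|[set k | s k < s i]| = s i.
Proof.
rewrite -[RHS](@card_ord_lt (s i) (ltnW (ltn_ord (s i)))).
rewrite -(card_preimset [set m : 'I_n | m < s i] (@perm_inj _ s)).
by apply: eq_card => k; rewrite !inE.
Qed.

Lemma perm_order_inj (s t : 'S_n) :
  (forall k i, (s k < s i) = (t k < t i)) -> s = t.
Proof.
move=> same_order; apply/permP => i; apply: val_inj.
by rewrite /= -card_perm_lt -[RHS]card_perm_lt; apply: eq_card => k; rewrite !inE same_order.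
Qed.

End PermutationOrder.

Lemma leq_upto (f : nat -> nat) N :
  (forall p, p < N -> f p <= f p.+1) -> forall p, p <= N -> f p <= f N.
Proof.
move=> f_step p le_pN; rewrite -(subnKC le_pN) in f_step *.
elim: (N - p) f_step => [|k IHk] f_step; first by rewrite addn0.
rewrite addnS; apply: leq_trans (f_step _ _); last by rewrite addnS.
by apply: IHk => q lt_q; apply: f_step; rewrite addnS ltnW.
Qed.

Section ConstrainedWords.
(* Words [f] of length [n = n' + 1] over [{0,...,a'}] whose letters rise
   weakly, and strictly at the positions [p] where [e p] holds:
   [f_p + e_p <= f_(p+1)].  Replacing [f_p] by [f_p + p - (e_0 + ... + e_(p-1))]
   turns them into the strictly increasing sequences with values in
   [{0,...,a' + n' - d}], where [d = e_0 + ... + e_(n'-1)]; hence there are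
   ['C(a' + n' - d + 1, n)] of them. *)
Variables (n' a' : nat) (e : nat -> bool).
Local Notation n := n'.+1.
Local Notation a := a'.+1.
Implicit Types (f : {ffun 'I_n -> 'I_a}).

Definition rises f : bool := [forall p : 'I_n', letter f p + e p <= letter f p.+1].

Lemma risesP f :
  reflect (forall p, p < n' -> letter f p + e p <= letter f p.+1) (rises f).
Proof.
apply: (iffP forallP) => [rise_f p lt_pn | rise_f p]; last exact: rise_f.
exact: (rise_f (Ordinal lt_pn)).
Qed.

Definition strict_before (p : nat) : nat := \sum_(0 <= q < p) e q.
Local Notation sb := strict_before.
Local Notation m := (a' + n' - sb n').

Lemma strict_beforeS p : sb p.+1 = sb p + e p.
Proof. by rewrite /sb big_nat_recr. Qed.

Lemma strict_before_le p : sb p <= p.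
Proof.
elim: p => [|p IHp]; first by rewrite /sb big_geq.
by rewrite strict_beforeS -addn1 leq_add ?leq_b1.
Qed.

Definition shifted f p : nat := letter f p + p - sb p.

Definition encode f : n.-tuple 'I_m.+1 := [tuple (inord (shifted f i) : 'I_m.+1) | i < n].

Definition tletter (t : n.-tuple 'I_m.+1) p : nat := tnth t (inord p).

Definition unshifted (t : n.-tuple 'I_m.+1) p : nat := tletter t p + sb p - p.

Definition decode (t : n.-tuple 'I_m.+1) : {ffun 'I_n -> 'I_a} :=
  [ffun i : 'I_n => (inord (unshifted t i) : 'I_a)].

Lemma sorted_tletterP (t : n.-tuple 'I_m.+1) :
  reflect (forall p, p < n' -> tletter t p < tletter t p.+1) (sorted ltn (map val t)).
Proof.
have nth_t p : p < n -> nth 0 (map val t) p = tletter t p.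
  by move=> lt_pn; rewrite (nth_map ord0) ?size_tuple // /tletter (tnth_nth ord0) inordK.
apply: (iffP (sortedP 0)); rewrite size_map size_tuple => sorted_t p lt_pn.
  by rewrite -!nth_t ?ltnS ?(ltnW lt_pn) //; apply: sorted_t.
by rewrite !nth_t ?(ltnW lt_pn) //; apply: sorted_t.
Qed.

Section Encode.
Variables (f : {ffun 'I_n -> 'I_a}) (rise_f : rises f).

Lemma shifted_step p : p < n' -> shifted f p < shifted f p.+1.
Proof.
move=> lt_pn; have := risesP f rise_f p lt_pn; have := strict_beforeS p.
have := strict_before_le p; have := leq_b1 (e p); rewrite /shifted; lia.
Qed.

Lemma shifted_bound p : p <= n' -> shifted f p <= m.
Proof.
move=> le_pn; apply: leq_trans (@leq_upto (shifted f) n'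
  (fun q lt_q => ltnW (shifted_step q lt_q)) p le_pn) _.
have := @letter_lt n' a f n'; have := strict_before_le n'; rewrite /shifted; lia.
Qed.

Lemma tletter_encode p : p <= n' -> tletter (encode f) p = shifted f p.
Proof. by move=> le_pn; rewrite /tletter tnth_mktuple !inordK ?ltnS ?shifted_bound. Qed.

Lemma encode_sorted : sorted ltn (map val (encode f)).
Proof.
apply/sorted_tletterP => p lt_pn.
by rewrite !tletter_encode ?(ltnW lt_pn) //; apply: shifted_step.
Qed.

Lemma encodeK : decode (encode f) = f.
Proof.
apply/ffunP => i; apply: val_inj; have le_sb := strict_before_le i.
rewrite ffunE /unshifted tletter_encode -1?ltnS // /shifted letter_val.
rewrite subnK ?addnK ?inord_val //; exact: leq_trans le_sb (leq_addl _ _).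
Qed.

End Encode.

Section Decode.
(* Conversely [unshifted t] rises as prescribed and stays below [a'] when
   [t] is strictly increasing, since then [p <= t_p <= m]. *)
Variables (t : n.-tuple 'I_m.+1) (sorted_t : sorted ltn (map val t)).

Lemma tletter_step p : p < n' -> tletter t p < tletter t p.+1.
Proof. exact: (sorted_tletterP t sorted_t). Qed.

Lemma tletter_le p : tletter t p <= m.
Proof. by rewrite -ltnS ltn_ord. Qed.

Lemma tletter_ge p : p <= n' -> p <= tletter t p.
Proof.
elim: p => [|p IHp] lt_pn //.
exact: leq_ltn_trans (IHp (ltnW lt_pn)) (tletter_step p lt_pn).
Qed.

Lemma unshifted_step p : p < n' -> unshifted t p + e p <= unshifted t p.+1.
Proof.
move=> lt_pn; have := tletter_step p lt_pn; have := tletter_ge p (ltnW lt_pn).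
have := strict_beforeS p; have := strict_before_le p; have := leq_b1 (e p).
rewrite /unshifted; lia.
Qed.

Lemma unshifted_bound p : p <= n' -> unshifted t p <= a'.
Proof.
move=> le_pn; apply: leq_trans (@leq_upto (unshifted t) n'
  (fun q lt_q => leq_trans (leq_addr _ _) (unshifted_step q lt_q)) p le_pn) _.
have := tletter_le n'; have := tletter_ge n' (leqnn n'); have := strict_before_le n'.
rewrite /unshifted; lia.
Qed.

Lemma letter_decode p : p <= n' -> letter (decode t) p = unshifted t p.
Proof. by move=> le_pn; rewrite /letter ffunE !inordK // ltnS unshifted_bound. Qed.

Lemma decode_rises : rises (decode t).
Proof.
apply/risesP => p lt_pn; rewrite !letter_decode ?(ltnW lt_pn) //.
exact: unshifted_step.
Qed.

Lemma decodeK : encode (decode t) = t.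
Proof.
apply: eq_from_tnth => i; apply: val_inj; rewrite tnth_mktuple /=.
have le_in : i <= n' by rewrite -ltnS.
have -> : shifted (decode t) i = tletter t i.
  rewrite /shifted letter_decode // /unshifted.
  have := tletter_ge i le_in; have := strict_before_le i; lia.
by rewrite inordK ?ltnS ?tletter_le // /tletter inord_val.
Qed.

End Decode.

Lemma card_rises : #|[set f : {ffun 'I_n -> 'I_a} | rises f]| = 'C(m.+1, n).
Proof.
rewrite -card_ltn_sorted_tuples.
apply: (card_set_bij encode decode) => [f|t|f|t].
- exact: encode_sorted.
- exact: decode_rises.
- exact: encodeK.
- exact: decodeK.
Qed.

End ConstrainedWords.
Arguments rises {n' a'} e f.

Section StdFibre.
(* The words with a given standardization [s] are, read in the order of
   [s], the weakly increasing words that increase strictly at the descents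
   of [s^-1]. *)
Variables (n' a' : nat) (s : 'S_n'.+1).
Local Notation n := n'.+1.
Local Notation a := a'.+1.
Implicit Types (y : {ffun 'I_n -> 'I_a}).

Definition ranked (p : nat) : 'I_n := (s^-1)%g (inord p).

Definition inv_descent (p : nat) : bool := ranked p.+1 < ranked p.

Lemma ranked_rank i : ranked (s i) = i.
Proof. by rewrite /ranked inord_val permK. Qed.

Lemma rank_ranked p : p <= n' -> s (ranked p) = p :> nat.
Proof. by move=> le_pn; rewrite /ranked permKV inordK. Qed.

Lemma strict_before_inv_descent : strict_before inv_descent n' = descents (s^-1)%g.
Proof. by rewrite /descents -/(fdescents _) fdescents_sum. Qed.

Lemma lex_lt_adjacent y p : p < n' ->
  lex_lt y (ranked p) (ranked p.+1) = (y (ranked p) + inv_descent p <= y (ranked p.+1)).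
Proof.
move=> lt_pn; have neq_ranked : (ranked p : nat) != ranked p.+1.
  apply/eqP => /ord_inj /(congr1 (fun i => nat_of_ord (s i))).
  by rewrite /= !rank_ranked ?(ltnW lt_pn) //; lia.
rewrite /lex_lt /inv_descent; case: ltngtP => [lt_y | gt_y | ->] /=; lia.
Qed.

(* [std y = s] as soon as consecutive ranks of [s] are in standardization
   order: the latter is a strict total order, so [s] and [std y] then order
   all positions alike. *)
Lemma std_eq_adjacent y :
  (std y == s) = [forall p : 'I_n', lex_lt y (ranked p) (ranked p.+1)].
Proof.
apply/eqP/forallP => [std_y p | adjacent].
  by rewrite -std_lt std_y !rank_ranked ?ltnSn // ltnW.
have mono : {in [pred p | p <= n'] &, {homo ranked : p q / p < q >-> lex_lt y p q}}.
  apply: homo_ltn_in => [q p l|p q _ le_qn l /andP [_ lt_lq]|p _ lt_pn].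
  - exact: lex_lt_trans.
  - by rewrite inE (leq_trans (ltnW lt_lq)).
  - exact: (adjacent (Ordinal lt_pn)).
apply: perm_order_inj => k i; rewrite std_lt.
have le_n (j : 'I_n) : (s j : nat) \in [pred p | p <= n'] by rewrite inE -ltnS.
case: (ltngtP (s k) (s i)) => [lt_ki | lt_ik | /val_inj/perm_inj ->].
- by have := mono _ _ (le_n k) (le_n i) lt_ki; rewrite !ranked_rank.
- by have := mono _ _ (le_n i) (le_n k) lt_ik; rewrite !ranked_rank => /lex_lt_asym.
- exact: lex_lt_irr.
Qed.

Definition reindex y : {ffun 'I_n -> 'I_a} := [ffun i => y ((s^-1)%g i)].

Definition unreindex (f : {ffun 'I_n -> 'I_a}) : {ffun 'I_n -> 'I_a} := [ffun i => f (s i)].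

Lemma std_eq_rises y : (std y == s) = rises inv_descent (reindex y).
Proof.
rewrite std_eq_adjacent; apply: eq_forallb => p.
by rewrite lex_lt_adjacent // /letter !ffunE.
Qed.

Lemma card_std_fibre :
  #|[set y : {ffun 'I_n -> 'I_a} | std y == s]| = 'C((a' + n' - descents (s^-1)%g).+1, n).
Proof.
rewrite -strict_before_inv_descent -card_rises.
apply: (card_set_bij reindex unreindex) => [y|f|y _|f _]; rewrite ?std_eq_rises //.
- by congr rises; apply/ffunP => i; rewrite !ffunE permKV.
- by apply/ffunP => i; rewrite !ffunE permK.
- by apply/ffunP => i; rewrite !ffunE permKV.
Qed.

End StdFibre.

Section ShuffleMeasure.
Local Open Scope ring_scope.

Lemma gbinom_nat (m k : nat) : gbinom m%:Z k = ('C(m, k))%:R.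
Proof. by rewrite /gbinom lez_nat absz_nat; case: leqP => // lt_mk; rewrite bin_small. Qed.

(* For [a = a' + 1] and [n = n' + 1] the shuffle measure is
   [Q_a(s) = 'C(a' + n' - d(s^-1) + 1, n) / a^n], all quantities being
   natural numbers since [d(s^-1) <= n']. *)
Lemma shuffleQ_binom n' a' (s : 'S_n'.+1) :
  shuffleQ a'.+1 s =
  ('C((a' + n' - descents (s^-1)%g).+1, n'.+1))%:R / ((a'.+1) ^ n'.+1)%:R.
Proof.
have le_dn : (descents (s^-1)%g <= n')%N.
  by rewrite -(strict_before_inv_descent _ s) strict_before_le.
rewrite /shuffleQ -gbinom_nat; congr (gbinom _ _ / _); lia.
Qed.

End ShuffleMeasure.

Local Open Scope ring_scope.

Theorem theorem1p1 (n b r j : nat) :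
  (2 <= n)%N -> (2 <= b)%N -> (j < n)%N ->
  carriesPr n b r 0 j = \sum_(s : 'S_n | descents s == j) shuffleQ (b ^ r)%N s.
Proof.
case: n => [//|n'] _ le2b _; have b_gt0 : (0 < b)%N by apply: leq_trans le2b.
have [a' a_eq] : exists a', (b ^ r)%N = a'.+1.
  by exists (b ^ r).-1; rewrite prednK // expn_gt0 b_gt0.
rewrite carriesPr_count // a_eq carry_count_descents // count_by_std natr_sum mulr_suml.
by apply: eq_bigr => s _; rewrite card_std_fibre shuffleQ_binom.
Qed.
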